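(* Let $R$ be a commutative Noetherian ring with unity. Any two distinct associated primes of $R$ (viewed as vertices of $\Gamma_E(R)$) are joined by an edge in $\Gamma_E(R)$. Furthermore, every vertex $[v]$ of $\Gamma_E(R)$ is either an associated prime or is adjacent to a vertex $[z]$ such that $\operatorname{ann}(z)$ is an associated prime which is a maximal element of $\mathfrak F=\{\operatorname{ann}(x)\mid 0\neq x\in R\}$.
   Context: For $x,y\in R$ write $x\sim y$ iff $\operatorname{ann}(x)=\operatorname{ann}(y)$; this is an equivalence relation, $[x]$ denotes the class of $x$, and $[x]\cdot[y]=[xy]$ is well defined. Let $Z^*(R)$ be the set of nonzero zero divisors of $R$. The graph $\Gamma_E(R)$ is the simple graph whose vertices are the classes $[x]$ with $x\in Z^*(R)$, two distinct vertices $[x],[y]$ being adjacent iff $xy=0$. A prime ideal $\mathfrak p$ is an associated prime of $R$ if $\mathfrak p=\operatorname{ann}(y)$ for some $y\in R$; the map $\mathfrak p=\operatorname{ann}(y)\mapsto[y]$ injects the set $\operatorname{Ass}(R)$ of associated primes into the vertex set, and a vertex $[y]$ is called an associated prime if $\operatorname{ann}(y)$ is a prime ideal. *)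

From mathcomp Require Import all_boot all_order all_algebra.
Set Implicit Arguments. Unset Strict Implicit. Unset Printing Implicit Defensive.
Import GRing.Theory.
Local Open Scope ring_scope.

Section Defs.
Variable R : comNzRingType.

Definition subset_of (I J : R -> Prop) : Prop := forall x, I x -> J x.
Definition same_set (I J : R -> Prop) : Prop := forall x, I x <-> J x.

Definition is_ideal (I : R -> Prop) : Prop :=
  [/\ I 0, (forall x y, I x -> I y -> I (x + y)) &
      (forall r x, I x -> I (r * x))].

Definition is_prime_ideal (P : R -> Prop) : Prop :=
  [/\ is_ideal P, ~ P 1 & (forall a b, P (a * b) -> P a \/ P b)].

Definition noetherian : Prop :=
  forall I : nat -> (R -> Prop), (forall n, is_ideal (I n)) ->
    (forall n, subset_of (I n) (I n.+1)) ->
    exists N : nat, forall n, (N <= n)%N -> same_set (I n) (I N).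

Definition ann (x : R) : R -> Prop := fun y => x * y = 0.

(* x ~ y iff ann x = ann y ; [x] = [y] in the vertex set *)
Definition ann_equiv (x y : R) : Prop := same_set (ann x) (ann y).

Definition nz_zero_divisor (x : R) : Prop := x <> 0 /\ exists y, y <> 0 /\ x * y = 0.

Definition assoc_prime_vertex (y : R) : Prop := is_prime_ideal (ann y).

Definition maximal_in_F (z : R) : Prop :=
  z <> 0 /\ forall x, x <> 0 -> subset_of (ann z) (ann x) -> same_set (ann x) (ann z).

Definition adjacent (x y : R) : Prop := ~ ann_equiv x y /\ x * y = 0.
End Defs.

From mathcomp Require Import all_boot all_order all_algebra.
From Stdlib Require Import Classical ClassicalEpsilon.
Import GRing.Theory.
Local Open Scope ring_scope.

(* For two associated primes ann y1 <> ann y2: if y1 y2 were nonzero, primality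
   of ann y1 and of ann y2 would force ann (y1 y2) to equal both, so y1 y2 = 0.
   For an arbitrary vertex [v], pick w <> 0 with v w = 0; by the maximal
   condition of a Noetherian ring, ann w lies in a maximal member ann z of
   {ann x | x <> 0}, which is prime, and v z = 0 since v lies in ann w.  Either
   [v] = [z] is itself an associated prime, or [v] and [z] are adjacent. *)

Section Annihilators.
Context {R : comNzRingType}.

Lemma ann_is_ideal (x : R) : is_ideal (ann x).
Proof.
split; rewrite /ann ?mulr0 //.
- by move=> a b Ha Hb; rewrite mulrDr Ha Hb addr0.
- by move=> r a Ha; rewrite mulrCA Ha mulr0.
Qed.

Lemma ann_subset_mulr (x y : R) : subset_of (ann x) (ann (x * y)).
Proof. by move=> r; rewrite /ann => Hr; rewrite mulrAC Hr mul0r. Qed.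

Lemma prime_ideal_same_set (I J : R -> Prop) :
  same_set I J -> is_prime_ideal I -> is_prime_ideal J.
Proof.
move=> IJ [[I0 ID IM] I1 Ip]; split; first split.
- exact/IJ.
- by move=> x y /IJ Hx /IJ Hy; apply/IJ/ID.
- by move=> r x /IJ Hx; apply/IJ/IM.
- by move/IJ.
- by move=> a b /IJ/Ip [] /IJ; [left | right].
Qed.

Lemma prime_ann_mulr {x y : R} :
  is_prime_ideal (ann y) -> y * x <> 0 -> same_set (ann (y * x)) (ann y).
Proof.
move=> [_ _ Py] yx0 s; split; last exact: ann_subset_mulr.
move=> yxs; have : ann y (x * s) by rewrite /ann mulrA.
by case/Py.
Qed.

Lemma distinct_prime_anns_mul_eq0 {y1 y2 : R} :
  is_prime_ideal (ann y1) -> is_prime_ideal (ann y2) -> ~ ann_equiv y1 y2 ->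
  y1 * y2 = 0.
Proof.
move=> P1 P2 y12; apply: NNPP => y1y2; apply: y12 => s.
have y2y1 : y2 * y1 <> 0 by rewrite mulrC.
by rewrite -(prime_ann_mulr P1 y1y2 s) -(prime_ann_mulr P2 y2y1 s) (mulrC y1).
Qed.

Lemma maximal_in_F_assoc_prime {z : R} :
  maximal_in_F z -> assoc_prime_vertex z.
Proof.
move=> [z0 zmax]; split; first exact: ann_is_ideal.
- by rewrite /ann mulr1.
- move=> a b zab; case: (classic (ann z a)) => za; [by left | right].
  apply: (zmax _ za (ann_subset_mulr z a) b).1.
  by rewrite /ann -mulrA.
Qed.

Lemma noetherian_maximal_condition {P : (R -> Prop) -> Prop} {I0 : R -> Prop} :
  noetherian R -> (forall I, P I -> is_ideal I) -> P I0 ->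
  exists I, P I /\ forall J, P J -> subset_of I J -> same_set J I.
Proof.
move=> HR Pideal PI0; apply: NNPP => nomax.
have grow I : P I -> exists J, [/\ P J, subset_of I J & ~ same_set J I].
  move=> PI; apply: NNPP => nogrow; apply: nomax; exists I; split=> // J PJ IJ.
  by apply: NNPP => JI; apply: nogrow; exists J.
pose g I := epsilon (inhabits I0)
  (fun J => [/\ P J, subset_of I J & ~ same_set J I]).
have gP I : P I -> [/\ P (g I), subset_of I (g I) & ~ same_set (g I) I].
  by move=> PI; apply: (epsilon_spec (inhabits I0) _ (grow I PI)).
have chainP n : P (iter n g I0) by elim: n => //= n /gP[].
have [N stable] := HR (fun n => iter n g I0) (fun n => Pideal _ (chainP n))
  (fun n => let: And3 _ sub _ := gP _ (chainP n) in sub).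
by have [_ _] := gP _ (chainP N); apply; apply: (stable N.+1).
Qed.

Lemma ann_le_maximal_in_F {w : R} : noetherian R -> w <> 0 ->
  exists z, maximal_in_F z /\ subset_of (ann w) (ann z).
Proof.
move=> HR w0.
pose P (I : R -> Prop) := exists x, [/\ x <> 0, I = ann x & subset_of (ann w) I].
have Pideal I : P I -> is_ideal I by move=> [x [_ -> _]]; apply: ann_is_ideal.
have Pw : P (ann w) by exists w; split.
have [I [[z [z0 -> wz]] zmax]] := noetherian_maximal_condition HR Pideal Pw.
exists z; split=> //; split=> // x x0 zx; apply: zmax => //.
by exists x; split=> // r /wz /zx.
Qed.

End Annihilators.

Theorem lemma1p2 (R : comNzRingType) (HR : noetherian R) :
  (forall y1 y2 : R,
      nz_zero_divisor y1 -> nz_zero_divisor y2 ->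
      assoc_prime_vertex y1 -> assoc_prime_vertex y2 ->
      ~ ann_equiv y1 y2 -> adjacent y1 y2)
  /\
  (forall v : R, nz_zero_divisor v ->
      assoc_prime_vertex v \/
      exists z : R, [/\ nz_zero_divisor z, adjacent v z,
                        assoc_prime_vertex z & maximal_in_F z]).
Proof.
split.
- move=> y1 y2 _ _ P1 P2 y12; split=> //.
  exact: distinct_prime_anns_mul_eq0 P1 P2 y12.
- move=> v [v0 [w [w0 vw]]].
  have [z [zmax wz]] := ann_le_maximal_in_F HR w0.
  have vz : v * z = 0 by rewrite mulrC; apply: wz; rewrite /ann mulrC.
  have Pz := maximal_in_F_assoc_prime zmax.
  case: (classic (ann_equiv v z)) => vz_equiv.
  + by left; apply: prime_ideal_same_set Pz => s; rewrite (vz_equiv s).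
  + right; exists z; split=> //; split; first by case: zmax.
    by exists v; rewrite mulrC.
Qed.
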